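(* Let $\delta>0$ with $1/\delta\in\mathbb N$ and $\epsilon_{\mathrm{large}}>0$. Let $I_C$ be a set of items packed (stacked one on top of the other) inside a horizontal container $C\subseteq K=[0,N]^2$, each of placed width greater than $\epsilon_{\mathrm{large}}N$. Then there exist a set $I'_C\subseteq I_C$ with $|I'_C|\ge|I_C|-g(\delta,\epsilon_{\mathrm{large}})$, where $g$ depends only on $\delta$ and $\epsilon_{\mathrm{large}}$, and pairwise disjoint horizontal containers $C_1,\dots,C_{1/\delta}$, all lying inside $C$, which together pack all items of $I'_C$ (stacked inside each container), such that the total area inside $\bigcup_{j=1}^{1/\delta}C_j$ not occupied by any item is at most $\delta\cdot a(C)$, where $a(C)=w(C)h(C)$. (Symmetrically for vertical containers with items of placed height greater than $\epsilon_{\mathrm{large}}N$.)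
   Context: A container is an open axis-parallel rectangle $C\subseteq K$ with integer corner coordinates, labelled horizontal, vertical, or area; $w(C),h(C)$ denote its width and height. Items inside a horizontal container are stacked one on top of the other (their vertical projections are pairwise disjoint); items inside a vertical container are placed one next to the other (their horizontal projections are pairwise disjoint). *)

From mathcomp Require Import all_boot all_order all_algebra.
Set Implicit Arguments. Unset Strict Implicit. Unset Printing Implicit Defensive.
Import Order.TTheory GRing.Theory Num.Theory.
Local Open Scope ring_scope.

(* A container: open axis-parallel rectangle (cx, cx+cw) x (cy, cy+ch)
   with integer (natural) corner coordinates. *)
Record container := Container { cx : nat; cy : nat; cw : nat; ch : nat }.

Definition in_K (N : nat) (C : container) : Prop :=
  (cx C + cw C <= N)%N /\ (cy C + ch C <= N)%N.

Definition sub_container (C D : container) : Prop :=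
  [/\ (cx D <= cx C)%N, (cx C + cw C <= cx D + cw D)%N,
      (cy D <= cy C)%N & (cy C + ch C <= cy D + ch D)%N].

Definition in_cont (R : realFieldType) (C : container) (p : R * R) : bool :=
  [&& (cx C)%:R < p.1, p.1 < (cx C + cw C)%:R,
      (cy C)%:R < p.2 & p.2 < (cy C + ch C)%:R].

Definition cont_disjoint (R : realFieldType) (C D : container) : Prop :=
  forall p : R * R, ~~ (in_cont C p && in_cont D p).

Definition item_in (R : realFieldType) (C : container) (w h : nat) (x y : R) : Prop :=
  [/\ (cx C)%:R <= x, x + w%:R <= (cx C + cw C)%:R,
      (cy C)%:R <= y & y + h%:R <= (cy C + ch C)%:R].

Definition packed (R : realFieldType) (hor : bool) (T : finType) (C : container)
  (S : {set T}) (w h : T -> nat) (x y : T -> R) : Prop :=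
  (forall i, i \in S -> item_in C (w i) (h i) (x i) (y i)) /\
  (forall i j, i \in S -> j \in S -> i != j -> forall t : R,
     if hor then ~~ ((y i < t < y i + (h i)%:R) && (y j < t < y j + (h j)%:R))
     else ~~ ((x i < t < x i + (w i)%:R) && (x j < t < x j + (w j)%:R))).

From mathcomp Require Import all_boot all_order all_algebra.
From mathcomp Require Import lra zify.
Set Implicit Arguments. Unset Strict Implicit. Unset Printing Implicit Defensive.
Import Order.TTheory GRing.Theory Num.Theory.
Local Open Scope ring_scope.

(* No item has to be discarded.
   Let W = w(C). Split the items of the horizontal container C into k classes
   according to their width, class j collecting the widths in (jW/k, (j+1)W/k],
   and stack the items of class j in a container C_j of width (j+1)W/k and of
   height their total height. Since the items are stacked in C, the total height
   of all items is at most h(C), so the C_j can in turn be stacked on top of each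
   other inside C. An item of class j and height h wastes at most (W/k) h of the
   area of C_j, so the total waste is at most W h(C) / k. The vertical case is
   the transpose of the horizontal one. *)

Lemma open_itv_disjoint (R : realFieldType) (u l v m t : R) :
  u + l <= v -> ~~ ((u < t < u + l) && (v < t < v + m)).
Proof. by move=> ulv; apply/negP => /andP[/andP[_ ?] /andP[? _]]; lra. Qed.

Lemma disjoint_open_itv_le (R : realFieldType) (u l v m : R) :
  0 < l -> 0 < m -> u <= v ->
  (forall t, ~~ ((u < t < u + l) && (v < t < v + m))) -> u + l <= v.
Proof.
move=> l0 m0 uv disj; rewrite leNgt; apply/negP => vul.
have [ulvm|vmul] := lerP (u + l) (v + m).
- case/negP: (disj ((v + (u + l)) / 2)); apply/and3P; split; try apply/andP; try split; lra.
- case/negP: (disj ((v + (v + m)) / 2)); apply/and3P; split; try apply/andP; try split; lra.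
Qed.

Lemma sum_disjoint_lengths_le (R : realFieldType) (T : finType) (S : {set T})
    (y l : T -> R) (a b : R) :
  a <= b -> (forall i, i \in S -> 0 < l i) ->
  (forall i, i \in S -> a <= y i /\ y i + l i <= b) ->
  (forall i j, i \in S -> j \in S -> i != j -> forall t,
     ~~ ((y i < t < y i + l i) && (y j < t < y j + l j))) ->
  \sum_(i in S) l i <= b - a.
Proof.
have [n] := ubnP #|S|; elim: n => // n IH in S b *.
move=> Sn ab lpos inab disj.
have [->|[i0 i0S]] := set_0Vmem S; first by rewrite big_set0 subr_ge0.
have [m mS ym_max] := arg_maxP y i0S.
have {}mS : m \in S := mS.
have [am mb] := inab m mS.
(* The item [m] starting highest lies above all the others. *)
have below j : j \in S :\ m -> y j + l j <= y m.
  rewrite !inE => /andP[jm jS].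
  apply: disjoint_open_itv_le (lpos j jS) (lpos m mS) (ym_max j jS) _.
  exact: disj.
have IHm : \sum_(i in S :\ m) l i <= y m - a.
  apply: IH => //.
  - by rewrite (cardsD1 m) mS add1n ltnS in Sn.
  - by move=> i /setD1P[_ /lpos].
  - move=> i iSm; split; last exact: below.
    by case/setD1P: iSm => _ /inab[].
  - by move=> i j /setD1P[_ iS] /setD1P[_ jS]; exact: disj.
rewrite (big_setD1 m mS) /=; lra.
Qed.

Lemma packed_sum_height_le (R : realFieldType) (T : finType) (C : container)
    (S : {set T}) (w h : T -> nat) (x y : T -> R) :
  (forall i, i \in S -> (0 < h i)%N) -> packed true C S w h x y ->
  (\sum_(i in S) h i <= ch C)%N.
Proof.
move=> hpos [inC disj]; rewrite -(ler_nat R) natr_sum.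
have -> : (ch C)%:R = (cy C + ch C)%:R - (cy C)%:R :> R by rewrite natrD; lra.
apply: (sum_disjoint_lengths_le (y := y)) => //.
- by rewrite ler_nat leq_addr.
- by move=> i /hpos; rewrite ltr0n.
- by move=> i /inC[].
Qed.

Lemma sub_leq_sum (T : finType) (P Q : pred T) (F : T -> nat) :
  (forall i, P i -> Q i) -> (\sum_(i | P i) F i <= \sum_(i | Q i) F i)%N.
Proof. by move=> PQ; apply: sub_le_big PQ => // m n; exact: leq_addr. Qed.

(* The level at which [a] sits when the items satisfying [P] are stacked in
   increasing order of rank [r]. *)
Definition offset (T : finType) (P : pred T) (r : T -> nat) (F : T -> nat) (a : T) : nat :=
  \sum_(i | P i && (r i < r a)%N) F i.

Section Offset.
Variables (T : finType) (P : pred T) (r : T -> nat) (F : T -> nat).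

Lemma offset_add_le_prefix a :
  P a -> (offset P r F a + F a <= \sum_(i | P i && (r i <= r a)%N) F i)%N.
Proof.
move=> Pa; rewrite [X in (_ <= X)%N](bigD1 a) /=; last by rewrite Pa leqnn.
rewrite addnC leq_add2l; apply: sub_leq_sum => i /andP[Pi ria].
by rewrite Pi ltnW //=; apply: contraTneq ria => ->; rewrite ltnn.
Qed.

Lemma offset_add_le_sum a : P a -> (offset P r F a + F a <= \sum_(i | P i) F i)%N.
Proof.
move=> Pa; apply: leq_trans (offset_add_le_prefix Pa) _.
by apply: sub_leq_sum => i /andP[].
Qed.

Lemma offset_add_le_offset a b :
  P a -> (r a < r b)%N -> (offset P r F a + F a <= offset P r F b)%N.
Proof.
move=> Pa rab; apply: leq_trans (offset_add_le_prefix Pa) _.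
apply: sub_leq_sum => i /andP[-> ria].
exact: leq_ltn_trans ria rab.
Qed.

End Offset.

Lemma cont_disjoint_below (R : realFieldType) (C D : container) :
  (cy C + ch C <= cy D)%N -> cont_disjoint R C D.
Proof.
rewrite -(ler_nat R) => CD p; apply/negP => /andP[/and4P[_ _ _ pC] /and4P[_ _ Dp _]].
lra.
Qed.

Lemma cont_disjoint_sym (R : realFieldType) (C D : container) :
  cont_disjoint R C D -> cont_disjoint R D C.
Proof. by move=> CD p; rewrite andbC. Qed.

Lemma packed_stack (R : realFieldType) (T : finType) (S : {set T}) (r : T -> nat)
    (w h : T -> nat) (X Y W : nat) (x' y' : T -> R) :
  {in S &, injective r} -> (forall i, i \in S -> w i <= W)%N ->
  {in S, forall i, x' i = X%:R} ->
  {in S, forall i, y' i = (Y + offset [in S] r h i)%:R} ->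
  packed true (Container X Y W (\sum_(i in S) h i)) S w h x' y'.
Proof.
move=> r_inj wW xS yS; split=> [i iS|i j iS jS ij t].
  rewrite /item_in /= xS // yS //; split.
  - exact: lexx.
  - by rewrite -natrD ler_nat leq_add2l wW.
  - by rewrite ler_nat leq_addr.
  - by rewrite -natrD ler_nat -addnA leq_add2l (offset_add_le_sum r h iS).
rewrite yS // yS //.
have {ij} rij : r i != r j by apply: contra ij => /eqP/r_inj->.
wlog rij_lt : i j iS jS {rij} / (r i < r j)%N => [sym|].
  case: ltngtP rij => // lt _; first exact: sym.
  by rewrite andbC; apply: sym.
apply: open_itv_disjoint.
by rewrite -natrD ler_nat -addnA leq_add2l (offset_add_le_offset h iS).
Qed.

Section WidthClasses.
Variables (k W : nat).
Hypothesis k_gt0 : (0 < k)%N.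

(* Class c collects the widths in (cW/k, (c+1)W/k]; they are rounded up to the
   width floor((c+1)W/k). *)
Definition width_class (w : nat) : nat := ((k * w).-1 %/ W)%N.
Definition class_width (c : nat) : nat := (c.+1 * W %/ k)%N.

Lemma class_width_le_W c : (c < k)%N -> (class_width c <= W)%N.
Proof.
by move=> ck; rewrite /class_width -{2}(mulKn W k_gt0) leq_div2r // leq_mul2r ck orbT.
Qed.

Variable w : nat.
Hypothesis w_range : (0 < w <= W)%N.

Let W_gt0 : (0 < W)%N. Proof. by case/andP: w_range => w_gt0 /(leq_trans w_gt0). Qed.
Let kw_divn := divn_eq (k * w).-1 W.
Let kw_modn := ltn_pmod (k * w).-1 W_gt0.

Lemma width_class_lt : (width_class w < k)%N.
Proof.
move: w_range kw_divn kw_modn; rewrite /width_class.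
set q := (_ %/ _)%N; set r := (_ %% _)%N; nia.
Qed.

Lemma le_class_width : (w <= class_width (width_class w))%N.
Proof.
rewrite /class_width leq_divRL //; move: w_range kw_divn kw_modn; rewrite /width_class.
set q := (_ %/ _)%N; set r := (_ %% _)%N; nia.
Qed.

Lemma class_width_le : (k * class_width (width_class w) <= k * w + W)%N.
Proof.
have := leq_trunc_div ((width_class w).+1 * W) k.
move: w_range kw_divn kw_modn; rewrite /class_width /width_class.
set q := (_ %/ W)%N; set r := (_ %% _)%N; set s := (_ %/ k)%N; nia.
Qed.

End WidthClasses.

Section HorizontalRegrouping.
Variables (R : realFieldType) (T : finType) (w h : T -> nat) (C : container)
  (I : {set T}) (x y : T -> R) (k : nat).
Hypothesis item_pos : forall i, i \in I -> (0 < w i)%N /\ (0 < h i)%N.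
Hypothesis I_packed : packed true C I w h x y.

Local Notation W := (cw C).

Lemma item_width_range i : i \in I -> (0 < w i <= W)%N.
Proof.
move=> iI; have [w_gt0 _] := item_pos iI; have [Cx xC _ _] := I_packed.1 i iI.
by rewrite w_gt0 -(ler_nat R); move: xC; rewrite natrD; lra.
Qed.

Definition group (i : T) : 'I_k.+1 := inord (width_class k.+1 W (w i)).
Definition group_items (j : 'I_k.+1) : {set T} := [set i in I | group i == j].
Definition group_height (j : 'I_k.+1) : nat := \sum_(i in group_items j) h i.
Definition group_cont (j : 'I_k.+1) : container :=
  Container (cx C) (cy C + offset predT val group_height j)
            (class_width k.+1 W j) (group_height j).
Definition group_y (i : T) : R :=
  (cy C + offset predT val group_height (group i)
        + offset [in group_items (group i)] enum_rank h i)%:R.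

Lemma val_group i : i \in I -> val (group i) = width_class k.+1 W (w i).
Proof. by move=> iI; rewrite /= inordK // width_class_lt // item_width_range. Qed.

Lemma group_width_bounds i : i \in I ->
  (w i <= class_width k.+1 W (group i))%N /\
  (k.+1 * class_width k.+1 W (group i) <= k.+1 * w i + W)%N.
Proof.
move=> iI; have wW := item_width_range iI; rewrite val_group //.
by split; [apply: le_class_width | apply: class_width_le].
Qed.

Lemma sum_group_height : (\sum_j group_height j = \sum_(i in I) h i)%N.
Proof.
rewrite [RHS](partition_big group xpredT) //; apply: eq_bigr => j _.
by apply: eq_bigl => i; rewrite inE.
Qed.

Lemma group_cont_sub j : sub_container (group_cont j) C.
Proof.
split => //=; first by rewrite leq_add2l class_width_le_W.
  exact: leq_addr.
rewrite -addnA leq_add2l.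
apply: leq_trans (@offset_add_le_sum _ predT val group_height j isT) _.
rewrite sum_group_height; apply: packed_sum_height_le I_packed.
by move=> i /item_pos[].
Qed.

Lemma group_cont_disjoint j j' :
  j != j' -> cont_disjoint R (group_cont j) (group_cont j').
Proof.
move=> ne; wlog jj' : j j' {ne} / (j < j')%N => [sym|].
  move: ne; rewrite -val_eqE; case: ltngtP => // lt _; first exact: sym.
  exact/cont_disjoint_sym/sym.
apply: cont_disjoint_below => /=; rewrite -addnA leq_add2l.
exact: (@offset_add_le_offset _ predT val group_height j j' isT).
Qed.

Lemma group_cont_packed j :
  packed true (group_cont j) (group_items j) w h (fun=> (cx C)%:R) group_y.
Proof.
apply: (packed_stack (r := enum_rank)) => //.
- by move=> a b _ _ /val_inj/enum_rank_inj.
- move=> i; rewrite inE => /andP[iI /eqP <-].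
  by have [] := group_width_bounds iI.
- by move=> i; rewrite inE => /andP[_ /eqP gij]; rewrite /group_y gij.
Qed.

Lemma group_waste :
  \sum_(j < k.+1) ((cw (group_cont j) * ch (group_cont j))%:R : R)
    - \sum_(i in I) ((w i * h i)%:R : R) <= k.+1%:R^-1 * (W * ch C)%:R.
Proof.
have -> : \sum_(j < k.+1) ((cw (group_cont j) * ch (group_cont j))%:R : R)
          = \sum_(i in I) ((class_width k.+1 W (group i) * h i)%:R : R).
  rewrite [RHS](partition_big group xpredT) //=; apply: eq_bigr => j _.
  rewrite /group_height big_distrr natr_sum /=.
  by apply: eq_big => [i|i]; rewrite inE // => /andP[_ /eqP ->].
rewrite -sumrB; apply: (@le_trans _ _ (\sum_(i in I) k.+1%:R^-1 * ((W * h i)%:R : R))).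
  apply: ler_sum => i iI; have [_] := group_width_bounds iI.
  rewrite -(ler_nat R) ler_pdivlMl ?ltr0n // !natrM natrD natrM.
  have := ler0n R (h i).
  move: (class_width _ _ _)%:R (w i)%:R (h i)%:R => c u v v0 le; nra.
rewrite -mulr_sumr ler_wpM2l ?invr_ge0 ?ler0n // -natr_sum ler_nat -big_distrr /=.
by rewrite leq_mul2l (packed_sum_height_le _ I_packed) ?orbT // => i /item_pos[].
Qed.

Lemma horizontal_regrouping :
  exists (Cs : 'I_k.+1 -> container) (asg : T -> 'I_k.+1) (x' y' : T -> R),
    [/\ (forall j, sub_container (Cs j) C),
        (forall j j', j != j' -> cont_disjoint R (Cs j) (Cs j')),
        (forall j, packed true (Cs j) [set i in I | asg i == j] w h x' y')
      & \sum_(j < k.+1) ((cw (Cs j) * ch (Cs j))%:R : R)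
          - \sum_(i in I) ((w i * h i)%:R : R)
        <= k.+1%:R^-1 * (cw C * ch C)%:R].
Proof.
exists group_cont, group, (fun=> (cx C)%:R), group_y; split.
- exact: group_cont_sub.
- exact: group_cont_disjoint.
- exact: group_cont_packed.
- exact: group_waste.
Qed.

End HorizontalRegrouping.

Definition transpose_cont (C : container) : container :=
  Container (cy C) (cx C) (ch C) (cw C).

Lemma sub_container_transpose (C D : container) :
  sub_container C D -> sub_container (transpose_cont C) (transpose_cont D).
Proof. by case. Qed.

Lemma in_cont_transpose (R : realFieldType) (C : container) (p : R * R) :
  in_cont (transpose_cont C) p = in_cont C (p.2, p.1).
Proof. by rewrite /in_cont /= andbA andbC -andbA. Qed.

Lemma cont_disjoint_transpose (R : realFieldType) (C D : container) :
  cont_disjoint R C D -> cont_disjoint R (transpose_cont C) (transpose_cont D).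
Proof. by move=> CD p; rewrite !in_cont_transpose. Qed.

Lemma packed_transpose (R : realFieldType) hor (T : finType) (C : container)
    (S : {set T}) (w h : T -> nat) (x y : T -> R) :
  packed hor C S w h x y -> packed (~~ hor) (transpose_cont C) S h w y x.
Proof.
case=> inC disj; split=> [i /inC[] //|i j iS jS ij t].
by have := disj i j iS jS ij t; case: (hor).
Qed.

Lemma transpose_contK : involutive transpose_cont.
Proof. by case. Qed.

Lemma regrouping (R : realFieldType) (hor : bool) (k : nat) (T : finType)
    (w h : T -> nat) (C : container) (I : {set T}) (x y : T -> R) :
  (forall i, i \in I -> (0 < w i)%N /\ (0 < h i)%N) -> packed hor C I w h x y ->
  exists (Cs : 'I_k.+1 -> container) (asg : T -> 'I_k.+1) (x' y' : T -> R),
    [/\ (forall j, sub_container (Cs j) C),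
        (forall j j', j != j' -> cont_disjoint R (Cs j) (Cs j')),
        (forall j, packed hor (Cs j) [set i in I | asg i == j] w h x' y')
      & \sum_(j < k.+1) ((cw (Cs j) * ch (Cs j))%:R : R)
          - \sum_(i in I) ((w i * h i)%:R : R)
        <= k.+1%:R^-1 * (cw C * ch C)%:R].
Proof.
case: hor => item_pos CI; first exact: horizontal_regrouping k item_pos CI.
have item_pos' i : i \in I -> (0 < h i)%N /\ (0 < w i)%N by case/item_pos.
have [Cs [asg [x' [y' [sub disj pk waste]]]]] :=
  horizontal_regrouping k item_pos' (packed_transpose CI).
exists (transpose_cont \o Cs), asg, y', x'; split => [j|j j' jj'|j|].
- by rewrite -[C]transpose_contK; apply: sub_container_transpose.
- exact: cont_disjoint_transpose (disj j j' jj').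
- exact: packed_transpose (pk j).
- move: waste; rewrite /= mulnC.
  by under eq_bigr do rewrite mulnC; under [X in _ - X <= _]eq_bigr do rewrite mulnC.
Qed.

Theorem mainTheorem13 (R : realFieldType) :
  exists g : nat -> R -> nat,
  forall (hor : bool) (k : nat) (eps : R), (0 < k)%N -> 0 < eps ->
  forall (N : nat) (T : finType) (w h : T -> nat) (C : container)
         (I : {set T}) (x y : T -> R),
    in_K N C ->
    (forall i, i \in I -> (0 < w i)%N /\ (0 < h i)%N) ->
    packed hor C I w h x y ->
    (forall i, i \in I -> eps * N%:R < (if hor then w i else h i)%:R) ->
    exists (I' : {set T}) (Cs : 'I_k -> container) (asg : T -> 'I_k)
           (x' y' : T -> R),
      (I' \subset I /\ (#|I| <= #|I'| + g k eps)%N) /\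
      [/\ (forall j, sub_container (Cs j) C),
          (forall j j', j != j' -> cont_disjoint R (Cs j) (Cs j')),
          (forall j, packed hor (Cs j) [set i in I' | asg i == j] w h x' y')
        & \sum_(j < k) ((cw (Cs j) * ch (Cs j))%:R : R)
            - \sum_(i in I') ((w i * h i)%:R : R)
          <= k%:R^-1 * (cw C * ch C)%:R].
Proof.
exists (fun _ _ => 0%N) => hor [//|k] eps _ _ N T w h C I x y _ item_pos CI _.
have [Cs [asg [x' [y' regrouped]]]] := regrouping k item_pos CI.
by exists I, Cs, asg, x', y'; rewrite subxx addn0.
Qed.
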